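(* Let $p\geq 1$, $\vec n\in\mathbb N_0^p$, $N\in\mathbb N_0$ with $|\vec n|\le N$, and let $\alpha_1,\dots,\alpha_p,\beta,x\in\mathbb R$ be such that all Pochhammer symbols appearing in denominators below are nonzero. Then $$\sum_{l_1=0}^{n_1}\cdots\sum_{l_p=0}^{n_p}\frac{(-N)_{l_1+\cdots+l_p}(x)_{l_1+\cdots+l_p}}{(x+\beta+2)_{l_1+\cdots+l_p}}C^{l_1,\dots,l_p}_{\vec n}=\frac{(\beta+2)_{|\vec n|-1}(-N)_{|\vec n|}}{(x+\beta+2)_{|\vec n|}\prod_{q=1}^p(\alpha_q+\beta+|\vec n|+1)_{n_q}}\Big((x+\beta+|\vec n|+1)\prod_{q=1}^p(\alpha_q-x+1)_{n_q}-x\prod_{q=1}^p(\alpha_q-x)_{n_q}\Big).$$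
   Context: $(a)_m=a(a+1)\cdots(a+m-1)$, $(a)_0=1$, and for $m\ge1$, $(a)_{m-1}$ is as usual; $|\vec n|=n_1+\cdots+n_p$. The coefficients are $$C^{l_1,\dots,l_p}_{\vec n}=\frac{(-N)_{|\vec n|}}{(-N)_{l_1+\cdots+l_p}}\prod_{i=1}^p\frac{(\alpha_i+1)_{n_i}}{(\alpha_i+\beta+|\vec n|+1)_{n_i}}\frac{(-n_i)_{l_i}}{l_i!}\frac{(\alpha_i+\beta+\sum_{k=1}^i n_k+1)_{\sum_{j=i}^p l_j}}{(\alpha_i+1)_{\sum_{j=i}^p l_j}}\prod_{i=1}^{p-1}\frac{(\alpha_i+n_i+1)_{\sum_{j=i+1}^p l_j}}{(\alpha_i+\beta+\sum_{k=1}^i n_k+1)_{\sum_{j=i+1}^p l_j}}.$$ *)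

From HB Require Import structures.
From mathcomp Require Import all_boot all_order all_algebra.
Set Implicit Arguments. Unset Strict Implicit. Unset Printing Implicit Defensive.
Import Order.TTheory GRing.Theory Num.Theory.
Local Open Scope ring_scope.

Definition poch {R : pzRingType} (a : R) (m : nat) : R :=
  \prod_(i < m) (a + i%:R).

(* (a)_{m-1} with the standard convention (a)_{-1} = 1/(a-1) when m = 0. *)
Definition poch_pred {R : fieldType} (a : R) (m : nat) : R :=
  if m is m'.+1 then poch a m' else (a - 1)^-1.

Definition tot {p : nat} (n : 'I_p -> nat) : nat := (\sum_(i < p) n i)%N.

Definition sum_ge {p : nat} (l : 'I_p -> nat) (i : 'I_p) : nat :=
  (\sum_(j < p | (i <= j)%N) l j)%N.
Definition sum_gt {p : nat} (l : 'I_p -> nat) (i : 'I_p) : nat :=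
  (\sum_(j < p | (i < j)%N) l j)%N.
Definition sum_le {p : nat} (n : 'I_p -> nat) (i : 'I_p) : nat :=
  (\sum_(k < p | (k <= i)%N) n k)%N.

(* The coefficient C^{l_1,...,l_p}_{n} of the paper (indices i = 1..p are
   the ordinals 0..p-1; the product over i = 1..p-1 is over i with i+1 < p). *)
Definition Ccoef {R : fieldType} (p N : nat) (alpha : 'I_p -> R) (beta : R)
    (n l : 'I_p -> nat) : R :=
  poch (- (N%:R)) (tot n) / poch (- (N%:R)) (tot l)
  * (\prod_(i < p)
       (poch (alpha i + 1) (n i) / poch (alpha i + beta + (tot n)%:R + 1) (n i)
        * (poch (- ((n i)%:R)) (l i) / ((l i)`!)%:R)
        * (poch (alpha i + beta + (sum_le n i)%:R + 1) (sum_ge l i)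
           / poch (alpha i + 1) (sum_ge l i))))
  * (\prod_(i < p | (i.+1 < p)%N)
       (poch (alpha i + (n i)%:R + 1) (sum_gt l i)
        / poch (alpha i + beta + (sum_le n i)%:R + 1) (sum_gt l i))).

From HB Require Import structures.
From mathcomp Require Import all_boot all_order all_algebra.
From mathcomp Require Import ring.
From Stdlib Require Import FunctionalExtensionality.
Set Implicit Arguments.
Unset Strict Implicit.
Unset Printing Implicit Defensive.

Import Order.TTheory GRing.Theory Num.Theory.
Local Open Scope ring_scope.

(* Once the factors of C that do not depend on l are pulled out, what remains
   (Ccore) factors coordinate by coordinate, the first coordinate contributing
   [head_coef].  With l_2, ..., l_p fixed, the sum over l_1 of
   (x)_{|l|} / (x + b + 1)_{|l|} times [head_coef] is a balanced terminating
   3F2(1), so Pfaff-Saalschutz evaluates it as a multiple of the same weight with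
   b replaced by b + n_1; by induction on p this gives a product formula
   ([Csum_x1]).  For the weight (x)_{|l|} / (x + b + 2)_{|l|} of the theorem the
   3F2 is not balanced, and one contiguous relation splits it into two balanced
   ones, leaving a combination of both weights in the remaining coordinates; a
   second induction on p, using [Csum_x1], gives the closed form ([Csum_x2]). *)

Local Notation tail f := (fun j => f (lift ord0 j)).

Section PochhammerRing.
Variable R : pzRingType.
Implicit Types a z : R.

Lemma poch0 a : poch a 0%N = 1.
Proof. by rewrite /poch big_ord0. Qed.

Lemma poch_recr a n : poch a n.+1 = poch a n * (a + n%:R).
Proof. by rewrite /poch big_ord_recr. Qed.

Lemma poch_recl a n : poch a n.+1 = a * poch (a + 1) n.
Proof.
rewrite /poch big_ord_recl /= addr0; congr (_ * _).
by apply: eq_bigr => i _; rewrite /bump /= add1n -addn1 natrD addrA addrAC.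
Qed.

Lemma poch_add a m k : poch a (m + k) = poch a m * poch (a + m%:R) k.
Proof.
rewrite /poch big_split_ord /=; congr (_ * _).
by apply: eq_bigr => i _ /=; rewrite natrD addrA.
Qed.

End PochhammerRing.

Section PochhammerComRing.
Variable R : comPzRingType.
Implicit Types a z : R.

Lemma poch_reflect z n : poch (- z - n%:R + 1) n = (-1) ^+ n * poch z n.
Proof.
elim: n z => [|n IH] z; first by rewrite !poch0 expr0 mulr1.
rewrite poch_recl poch_recr exprS.
have -> : - z - n.+1%:R + 1 + 1 = - z - n%:R + 1 by rewrite -natr1; ring.
by rewrite IH -natr1; ring.
Qed.

Lemma mul_signr_sqr n a b : (-1) ^+ n * a * ((-1) ^+ n * b) = a * b.
Proof. by rewrite mulrACA -exprMn mulrNN mulr1 expr1n mul1r. Qed.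

End PochhammerComRing.

Section Hypergeometric.
Variable R : numFieldType.
Implicit Types a b c d x z al be : R.

Lemma poch_add_neq0 {z m k} : poch z (m + k) != 0 ->
  poch z m != 0 /\ poch (z + m%:R) k != 0.
Proof. by rewrite poch_add mulf_eq0 negb_or => /andP[]. Qed.

Lemma poch_neq0_le {z m n} : (m <= n)%N -> poch z n != 0 -> poch z m != 0.
Proof. by move=> /subnKC <- /poch_add_neq0[]. Qed.

Lemma poch_succ_neq0 {a n} : poch a n.+1 != 0 ->
  [/\ a != 0, poch (a + 1) n != 0, poch a n != 0 & a + n%:R != 0].
Proof.
move=> h; have := h; rewrite poch_recl mulf_eq0 negb_or => /andP[-> ->].
by move: h; rewrite poch_recr mulf_eq0 negb_or => /andP[-> ->].
Qed.

Lemma poch_shift1 z n : z != 0 -> poch (z + 1) n = poch z n * (z + n%:R) / z.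
Proof. by move=> z0; apply: (mulfI z0); rewrite -poch_recl poch_recr mulrCA mulfV ?mulr1. Qed.

Lemma poch_swap {z m k} : poch z m != 0 ->
  poch (z + m%:R) k = poch z k * poch (z + k%:R) m / poch z m.
Proof. by move=> zm; apply: (mulfI zm); rewrite -poch_add addnC poch_add mulrCA mulfV ?mulr1. Qed.

Lemma poch_neg_nat (n l : nat) :
  poch (- n%:R) l / l`!%:R = (-1) ^+ l * 'C(n, l)%:R :> R.
Proof.
elim: l => [|l IH]; first by rewrite poch0 bin0 fact0 expr0 divr1 mulr1.
have l1 : l.+1%:R != 0 :> R by rewrite pnatr_eq0.
rewrite poch_recr factS natrM invfM.
transitivity (poch (- n%:R : R) l / l`!%:R * ((l%:R - n%:R) / l.+1%:R)); first by ring.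
rewrite IH exprS; case: (leqP l n) => [ln | nl]; last first.
  by rewrite !bin_small ?(leqW nl) // !mulr0 mul0r.
have := congr1 (fun k => k%:R : R) (mul_bin_left n l).
rewrite /= !natrM natrB // => bin_rec.
apply: (mulfI l1); transitivity (-1 * (-1) ^+ l * (l.+1%:R * 'C(n, l.+1)%:R) : R).
  by rewrite bin_rec; field; rewrite addrC natr1.
by ring.
Qed.

(* [hyper32 n a b c d] is the terminating series 3F2(-n, a, b; c, d; 1). *)
Definition hyper32 n a b c d : R :=
  \sum_(l < n.+1) (-1) ^+ l * 'C(n, l)%:R * (poch a l * poch b l / (poch c l * poch d l)).

Lemma alt_binom_sumS n (g : nat -> R) :
  \sum_(l < n.+2) (-1) ^+ l * 'C(n.+1, l)%:R * g l =
  \sum_(l < n.+1) (-1) ^+ l * 'C(n, l)%:R * g l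
  - \sum_(l < n.+1) (-1) ^+ l * 'C(n, l)%:R * g l.+1.
Proof.
rewrite big_ord_recl (eq_bigr (fun i : 'I_n.+1 =>
    (-1) ^+ i.+1 * 'C(n, i.+1)%:R * g i.+1 - (-1) ^+ i * 'C(n, i)%:R * g i.+1)); last first.
  by move=> i _; rewrite /bump /= binS natrD exprS; ring.
rewrite big_split /= sumrN addrA; congr (_ - _).
rewrite big_ord_recr [in RHS]big_ord_recl /= (bin_small (ltnSn n)) !bin0 mulr0 mul0r addr0.
by congr (_ + _); apply: eq_bigr => i _; rewrite /bump /=.
Qed.

Lemma alt_binom_sum_mulS n (h : nat -> R) :
  \sum_(l < n.+2) (-1) ^+ l * 'C(n.+1, l)%:R * (l%:R * h l.-1) =
  - (n.+1%:R * \sum_(l < n.+1) (-1) ^+ l * 'C(n, l)%:R * h l).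
Proof.
rewrite big_ord_recl /= mulr0n mul0r mulr0 add0r mulr_sumr -sumrN.
apply: eq_bigr => i _; rewrite /bump /= add1n.
have := congr1 (fun k => k%:R : R) (mul_bin_diag n.+1 i).
rewrite /= !natrM exprS => bin_diag.
transitivity (- ((-1) ^+ i * (i.+1%:R * 'C(n.+1, i.+1)%:R) * h i)); first by ring.
by rewrite -bin_diag; ring.
Qed.

Lemma hyper32S n a b c d : hyper32 n.+1 a b c d =
  hyper32 n a b c d - a * b / (c * d) * hyper32 n (a + 1) (b + 1) (c + 1) (d + 1).
Proof.
rewrite /hyper32 (alt_binom_sumS n (fun l => poch a l * poch b l / (poch c l * poch d l))).
rewrite mulr_sumr; congr (_ - _).
by apply: eq_bigr => l _; rewrite !poch_recl !invfM; ring.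
Qed.

Lemma hyper32S_pred n a b c d : hyper32 n.+1 a b c d =
  hyper32 n.+1 (a - 1) b c d
  - n.+1%:R * b / (c * d) * hyper32 n a (b + 1) (c + 1) (d + 1).
Proof.
pose h k := poch a k * poch b k.+1 / (poch c k.+1 * poch d k.+1).
have -> : n.+1%:R * b / (c * d) * hyper32 n a (b + 1) (c + 1) (d + 1)
    = n.+1%:R * \sum_(l < n.+1) (-1) ^+ l * 'C(n, l)%:R * h l.
  rewrite /hyper32 -!mulrA; congr (_ * _); rewrite !mulr_sumr; apply: eq_bigr => l _.
  by rewrite /h !poch_recl !invfM; ring.
rewrite -[n.+1%:R * _]opprK -alt_binom_sum_mulS opprK /hyper32 -big_split.
apply: eq_bigr => -[[|k] _] _ /=; first by rewrite !poch0 mulr0n !mul0r mulr0 addr0.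
by rewrite [poch (a - 1) _]poch_recl subrK /h poch_recr; ring.
Qed.

Theorem pfaff_saalschutz n a b c d : c + d = a + b - n%:R + 1 ->
  poch c n != 0 -> poch d n != 0 ->
  hyper32 n a b c d = (-1) ^+ n * poch (c - a) n * poch (c - b) n / (poch c n * poch d n).
Proof.
elim: n a b c d => [|n IH] a b c d balanced cn0 dn0.
  by rewrite /hyper32 big_ord1 !poch0 expr0 bin0 !(mul1r, mulr1).
have [c0 c1n cn cn'] := poch_succ_neq0 cn0.
have [d0 d1n dn dn'] := poch_succ_neq0 dn0.
rewrite hyper32S_pred hyper32S subrK.
rewrite (IH (a - 1) b c d) ?(IH a (b + 1) (c + 1) (d + 1)) //; first last.
- by rewrite balanced -natr1; ring.
- by transitivity (c + d + 2); [ring | rewrite balanced -natr1; ring].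
rewrite !poch_shift1 //.
have -> : c - (a - 1) = c - a + 1 by ring.
have -> : c + 1 - a = c - a + 1 by ring.
have -> : c + 1 - (b + 1) = c - b by ring.
rewrite [poch (c - a) n.+1]poch_recl [poch (c - b) n.+1]poch_recr.
rewrite [poch c n.+1]poch_recr [poch d n.+1]poch_recr exprS.
have -> : b = c + d - a + n%:R by rewrite balanced -natr1; ring.
by field; rewrite c0 d0 cn dn cn' dn'.
Qed.

(* The factor of [Ccoef] carried by the first coordinate [a = l_1]; [s] stands
   for the sum of the remaining [l_j]. *)
Definition head_coef n al be (s a : nat) : R :=
  poch (- n%:R) a / a`!%:R * poch (al + be + n%:R + 1 + s%:R) a
  * (poch (al + 1) (n + s) / poch (al + 1) (a + s)).

Lemma head_sum_hyper32 n al be x y s : poch (al + 1) s != 0 ->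
  \sum_(a < n.+1) poch x (a + s) / poch y (a + s) * head_coef n al be s a
  = poch x s * poch (al + 1 + s%:R) n / poch y s
    * hyper32 n (x + s%:R) (al + be + n%:R + 1 + s%:R) (al + 1 + s%:R) (y + s%:R).
Proof.
move=> As; rewrite /hyper32 mulr_sumr; apply: eq_bigr => a _.
rewrite /head_coef !(addnC _ s) !poch_add -mulrA poch_neg_nat.
have divKl (u v w : R) : u != 0 -> u * v / (u * w) = v / w.
  by move=> u0; rewrite invfM mulrACA mulfV ?mul1r.
by rewrite divKl // !invfM; ring.
Qed.

Lemma head_sum_x1 n al be x s :
  poch (al + 1) (s + n) != 0 -> poch (x + be + 1) (s + n) != 0 ->
  \sum_(a < n.+1) poch x (a + s) / poch (x + be + 1) (a + s) * head_coef n al be s a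
  = poch (al - x + 1) n * poch (be + 1) n / poch (x + be + 1) n
    * (poch x s / poch (x + (be + n%:R) + 1) s).
Proof.
move=> /poch_add_neq0[As Cn] Y; have [Ys Dn] := poch_add_neq0 Y.
move: Y; rewrite addnC => /poch_add_neq0[Yn Zs].
rewrite head_sum_hyper32 // pfaff_saalschutz //; last by ring.
have -> : al + 1 + s%:R - (x + s%:R) = al - x + 1 by ring.
have -> : al + 1 + s%:R - (al + be + n%:R + 1 + s%:R) = - (be + 1) - n%:R + 1 by ring.
rewrite poch_reflect mul_signr_sqr.
rewrite (poch_swap Ys) (_ : x + (be + n%:R) + 1 = x + be + 1 + n%:R); last by ring.
by field; rewrite Zs Yn Ys Cn.
Qed.

Lemma head_sum_x2 m al be x s (be' := be + m.+1%:R) :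
  poch (al + 1) (s + m.+1) != 0 -> poch (x + be + 2) (s + m.+1) != 0 ->
  \sum_(a < m.+2) poch x (a + s) / poch (x + be + 2) (a + s) * head_coef m.+1 al be s a
  = poch (be + 2) m * poch (al - x + 1) m / poch (x + be + 2) m.+1
    * ((al - x) * (be' + 1) * (poch x s / poch (x + be' + 2) s)
       + m.+1%:R * (x + be' + 1) * (poch x s / poch (x + be' + 1) s)).
Proof.
move=> /poch_add_neq0[As Cm] Y; have [Ys Dm] := poch_add_neq0 Y.
have [Pm Qs] : poch (x + be + 2) m != 0 /\ poch (x + be + 2 + m%:R) s != 0.
  by apply: poch_add_neq0; apply: (poch_neq0_le _ Y); rewrite addnC addnS.
have [_ _ _ Pm'] := poch_succ_neq0 (poch_neq0_le (leq_addl s m.+1) Y).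
have [C0 C1 Cn Cm'] := poch_succ_neq0 Cm.
have [D0 D1 Dn Dm'] := poch_succ_neq0 Dm.
have Ds : x + be + 2 + m%:R + s%:R != 0 by rewrite addrAC.
rewrite head_sum_hyper32 // hyper32S !pfaff_saalschutz //; first last.
- by rewrite -natr1; ring.
- by rewrite -natr1; ring.
have -> : al + 1 + s%:R + 1 - (x + s%:R + 1) = al - x + 1 by ring.
have -> : al + 1 + s%:R - (x + s%:R) = al - x + 1 by ring.
have -> : al + 1 + s%:R + 1 - (al + be + m.+1%:R + 1 + s%:R + 1) = - (be + 2) - m%:R + 1.
  by rewrite -natr1; ring.
have -> : al + 1 + s%:R - (al + be + m.+1%:R + 1 + s%:R) = - (be + 2) - m%:R + 1.
  by rewrite -natr1; ring.
rewrite poch_reflect !mul_signr_sqr (poch_shift1 _ C0) (poch_shift1 _ D0) (poch_swap Ys).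
rewrite [poch (al + 1 + s%:R) _]poch_recr [poch (x + be + 2) m.+1]poch_recr.
have -> : x + be' + 1 = x + be + 2 + m%:R by rewrite /be' -natr1; ring.
have -> : x + be' + 2 = x + be + 2 + m%:R + 1 by rewrite /be' -natr1; ring.
rewrite (poch_shift1 _ Pm') /be'.
by field; rewrite Qs Pm' Ds Pm D0 Ys C0 Cm' Cn.
Qed.

Lemma head_sum0 al be s (w : nat -> R) : poch (al + 1) s != 0 ->
  \sum_(a < 1) w (a + s)%N * head_coef 0%N al be s a = w s.
Proof. by move=> As; rewrite big_ord1 /head_coef !poch0 add0n divr1 mulfV // !mulr1. Qed.

End Hypergeometric.

Arguments head_coef {R}.

Section IndexSums.
Variable p : nat.
Implicit Types (f g : 'I_p -> nat) (i : 'I_p).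

Lemma leq_tot f i : (f i <= tot f)%N.
Proof. by rewrite /tot (bigD1 i) //= leq_addr. Qed.

Lemma leq_tot2 f g : (forall i, f i <= g i)%N -> (tot f <= tot g)%N.
Proof. by move=> fg; apply: leq_sum. Qed.

Lemma tot_eq0 f : tot f = 0%N -> forall i, f i = 0%N.
Proof. by move=> f0 i; apply/eqP; rewrite -leqn0 -f0 leq_tot. Qed.

Lemma sum_geE f i : sum_ge f i = (f i + sum_gt f i)%N.
Proof.
rewrite /sum_ge (bigD1 i) //=; congr (_ + _)%N.
by apply: eq_bigl => j; rewrite ltn_neqAle eq_sym andbC.
Qed.

Lemma sum_gt_last f i : ~~ (i.+1 < p)%N -> sum_gt f i = 0%N.
Proof.
move=> /negP ilast; rewrite /sum_gt big1 // => j ij; exfalso.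
exact: ilast (leq_ltn_trans ij (ltn_ord j)).
Qed.

End IndexSums.

Section IndexSumsRecl.
Variable p : nat.
Implicit Types f : 'I_p.+1 -> nat.

Lemma tot_recl f : tot f = (f ord0 + tot (tail f))%N.
Proof. by rewrite /tot big_ord_recl. Qed.

Lemma leq_tot_tail f (l : 'I_p -> nat) : (forall i, l i <= f (lift ord0 i))%N ->
  (tot l + f ord0 <= tot f)%N.
Proof. by move=> le_l; rewrite tot_recl addnC leq_add2l leq_tot2. Qed.

Lemma sum_le0 f : sum_le f ord0 = f ord0.
Proof. by rewrite /sum_le big_mkcond big_ord_recl /= big1 ?addn0. Qed.

Lemma sum_le_lift f j : sum_le f (lift ord0 j) = (f ord0 + sum_le (tail f) j)%N.
Proof. by rewrite /sum_le big_mkcond big_ord_recl /= [in RHS]big_mkcond. Qed.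

Lemma sum_ge0 f : sum_ge f ord0 = tot f.
Proof. by apply: eq_bigl. Qed.

Lemma sum_ge_lift f j : sum_ge f (lift ord0 j) = sum_ge (tail f) j.
Proof. by rewrite /sum_ge big_mkcond big_ord_recl /= [in RHS]big_mkcond. Qed.

Lemma sum_gt0 f : sum_gt f ord0 = tot (tail f).
Proof. by rewrite /sum_gt /tot big_mkcond big_ord_recl /= add0n. Qed.

Lemma sum_gt_lift f j : sum_gt f (lift ord0 j) = sum_gt (tail f) j.
Proof. by rewrite /sum_gt big_mkcond big_ord_recl /= [in RHS]big_mkcond. Qed.

End IndexSumsRecl.

Section FfunCons.
Variables (T : finType) (p : nat).

Definition ffun_cons (a : T) (l : {ffun 'I_p -> T}) : {ffun 'I_p.+1 -> T} :=
  [ffun i => if unlift ord0 i is Some j then l j else a].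

Lemma ffun_cons0 a l : ffun_cons a l ord0 = a.
Proof. by rewrite ffunE unlift_none. Qed.

Lemma ffun_cons_lift a l j : ffun_cons a l (lift ord0 j) = l j.
Proof. by rewrite ffunE liftK. Qed.

Lemma big_ffun_recl (S : Type) (idx : S) (op : Monoid.com_law idx)
    (F : {ffun 'I_p.+1 -> T} -> S) :
  \big[op/idx]_(l : {ffun 'I_p.+1 -> T}) F l =
  \big[op/idx]_(a : T) \big[op/idx]_(l : {ffun 'I_p -> T}) F (ffun_cons a l).
Proof.
rewrite pair_big /= (reindex (fun q : T * {ffun 'I_p -> T} => ffun_cons q.1 q.2)) //=.
exists (fun l : {ffun 'I_p.+1 -> T} => (l ord0, [ffun j => l (lift ord0 j)])).
  move=> [a l] _; rewrite ffun_cons0; congr (_, _).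
  by apply/ffunP => j; rewrite ffunE ffun_cons_lift.
move=> l _; apply/ffunP => i; rewrite ffunE.
by case: unliftP => [j ->|->] //=; rewrite ffunE.
Qed.

End FfunCons.

Arguments ffun_cons {T p}.

Section CoreFactor.
Variable F : fieldType.
Implicit Types be : F.

(* [Ccoef] stripped of (-N)_{|n|} / (-N)_{|l|} and of the (a_i + b + |n| + 1)_{n_i},
   with the remaining Pochhammer ratios merged by (c)_{j+k} = (c)_j (c + j)_k. *)
Definition Ccore {p} be (n : 'I_p -> nat) (al : 'I_p -> F) (l : 'I_p -> nat) : F :=
  \prod_(i < p) (poch (- (n i)%:R) (l i) / (l i)`!%:R
     * poch (al i + be + (sum_le n i)%:R + 1 + (sum_gt l i)%:R) (l i)
     * (poch (al i + 1) (n i + sum_gt l i) / poch (al i + 1) (sum_ge l i))).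

Lemma Ccoef_Ccore p N (al : 'I_p -> F) be (n l : 'I_p -> nat) :
  (forall i : 'I_p, (i.+1 < p)%N ->
     poch (al i + be + (sum_le n i)%:R + 1) (sum_gt l i) != 0) ->
  Ccoef N al be n l = poch (- N%:R) (tot n) / poch (- N%:R) (tot l)
    * ((\prod_(i < p) (poch (al i + be + (tot n)%:R + 1) (n i))^-1) * Ccore be n al l).
Proof.
move=> E_gt; rewrite /Ccoef /Ccore -mulrA; congr (_ * _).
rewrite (big_mkcond (fun i : 'I_p => (i.+1 < p)%N)) -!big_split /=.
apply: eq_bigr => i _.
rewrite [sum_ge l i]sum_geE [(l i + _)%N]addnC !poch_add.
rewrite (_ : al i + 1 + (n i)%:R = al i + (n i)%:R + 1); last by ring.
case: ifP => [ilt | /negbT ilast]; last first.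
  by rewrite sum_gt_last // !poch0 addr0; ring.
by rewrite -[RHS](mulfK (E_gt i ilt)); ring.
Qed.

End CoreFactor.

Section MultipleSum.
Variable R : numFieldType.
Implicit Types (x be : R) (w : nat -> R).

Definition Csum M {p} w be (n : 'I_p -> nat) (al : 'I_p -> R) : R :=
  \sum_(l : {ffun 'I_p -> 'I_M} | [forall i, l i <= n i]%N)
     w (tot (fun i => nat_of_ord (l i))) * Ccore be n al (fun i => nat_of_ord (l i)).

Lemma Ccore_recl p be (n : 'I_p.+1 -> nat) al l :
  Ccore be n al l = head_coef (n ord0) (al ord0) be (tot (tail l)) (l ord0)
                    * Ccore (be + (n ord0)%:R) (tail n) (tail al) (tail l).
Proof.
rewrite /Ccore big_ord_recl sum_le0 sum_gt0 sum_ge0 tot_recl /head_coef; congr (_ * _).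
apply: eq_bigr => j _; rewrite sum_le_lift sum_gt_lift sum_ge_lift natrD.
by congr (_ * poch _ _ * _); ring.
Qed.

Lemma Csum_recl M p w be (n : 'I_p.+1 -> nat) al : (n ord0 < M)%N ->
  Csum M w be n al =
  \sum_(l : {ffun 'I_p -> 'I_M} | [forall i, l i <= n (lift ord0 i)]%N)
    (\sum_(a < (n ord0).+1) w (a + tot (fun i => nat_of_ord (l i)))%N
       * head_coef (n ord0) (al ord0) be (tot (fun i => nat_of_ord (l i))) a)
    * Ccore (be + (n ord0)%:R) (tail n) (tail al) (fun i => nat_of_ord (l i)).
Proof.
move=> n0M; rewrite /Csum big_mkcond big_ffun_recl exchange_big /= [RHS]big_mkcond.
apply: eq_bigr => l _.
have le_cons (a : 'I_M) : [forall i, ffun_cons a l i <= n i]%N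
    = (a <= n ord0)%N && [forall j, l j <= n (lift ord0 j)]%N.
  apply/forallP/andP => [le_al | [le_a /forallP le_l] i].
    split; first by have := le_al ord0; rewrite ffun_cons0.
    by apply/forallP => j; have := le_al (lift ord0 j); rewrite ffun_cons_lift.
  by case: (unliftP ord0 i) => [j ->|->]; rewrite ?ffun_cons_lift ?ffun_cons0.
have tail_cons (a : 'I_M) : tail (fun i => nat_of_ord (ffun_cons a l i)) = (fun i => nat_of_ord (l i)).
  by apply: functional_extensionality => j; rewrite ffun_cons_lift.
case: (boolP [forall j, l j <= n (lift ord0 j)]%N) => le_l; last first.
  by rewrite big1 // => a _; rewrite le_cons (negbTE le_l) andbF.
pose F a := w (a + tot (fun i => nat_of_ord (l i)))%N
  * head_coef (n ord0) (al ord0) be (tot (fun i => nat_of_ord (l i))) a.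
rewrite (big_ord_widen M F n0M) big_distrl [RHS]big_mkcond /F /=.
apply: eq_bigr => a _; rewrite le_cons le_l andbT ltnS.
case: ifP => // _.
by rewrite tot_recl Ccore_recl tail_cons ffun_cons0 mulrA.
Qed.

Lemma Csum_head_eq M p w w' be (n : 'I_p.+1 -> nat) al : (n ord0 < M)%N ->
  (forall l : 'I_p -> nat, (forall i, l i <= n (lift ord0 i))%N ->
     \sum_(a < (n ord0).+1) w (a + tot l)%N * head_coef (n ord0) (al ord0) be (tot l) a
     = w' (tot l)) ->
  Csum M w be n al = Csum M w' (be + (n ord0)%:R) (tail n) (tail al).
Proof.
move=> n0M head_eq; rewrite Csum_recl //; apply: eq_bigr => l /forallP le_l.
by rewrite head_eq.
Qed.

Lemma CsumD M p w1 w2 be (n : 'I_p -> nat) al :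
  Csum M (fun s => w1 s + w2 s) be n al = Csum M w1 be n al + Csum M w2 be n al.
Proof. by rewrite /Csum -big_split; apply: eq_bigr => l _; rewrite mulrDl. Qed.

Lemma CsumZ M p c w be (n : 'I_p -> nat) al :
  Csum M (fun s => c * w s) be n al = c * Csum M w be n al.
Proof. by rewrite /Csum mulr_sumr; apply: eq_bigr => l _; rewrite mulrA. Qed.

Lemma Csum_tot0 M p w be (n : 'I_p -> nat) al :
  (forall i, n i < M)%N -> tot n = 0%N -> Csum M w be n al = w 0%N.
Proof.
move=> nM /tot_eq0 n0; pose l0 : {ffun 'I_p -> 'I_M} := [ffun i => Ordinal (nM i)].
have l0E i : nat_of_ord (l0 i) = 0%N by rewrite ffunE /= n0.
rewrite /Csum (big_pred1 l0); last first.
  move=> l /=; apply/forallP/eqP => [le_l | -> i]; last by rewrite l0E n0.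
  apply/ffunP => i; apply/val_inj/eqP; rewrite /= l0E -leqn0 -(n0 i); exact: le_l.
have -> : tot (fun i => nat_of_ord (l0 i)) = 0%N by apply: big1 => i _.
rewrite /Ccore big1 ?mulr1 // => i _.
have gt0 : sum_gt (fun j => nat_of_ord (l0 j)) i = 0%N by apply: big1 => j _.
have ge0 : sum_ge (fun j => nat_of_ord (l0 j)) i = 0%N by apply: big1 => j _.
by rewrite gt0 ge0 n0 l0E !poch0 fact0 mulr1n !divr1 !mulr1.
Qed.

Lemma Csum_x1 M p x be (n : 'I_p -> nat) al : (forall i, n i < M)%N ->
  (forall i, poch (al i + 1) (sum_ge n i) != 0) ->
  poch (x + be + 1) (tot n) != 0 ->
  Csum M (fun s => poch x s / poch (x + be + 1) s) be n al
  = poch (be + 1) (tot n) / poch (x + be + 1) (tot n)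
    * \prod_(i < p) poch (al i - x + 1) (n i).
Proof.
elim: p be n al => [|p IH] be n al nM alS Y.
  have t0 : tot n = 0%N by rewrite /tot big_ord0.
  by rewrite Csum_tot0 // t0 big_ord0 !poch0 divr1 mulr1.
rewrite (Csum_head_eq (w' := fun s => poch (al ord0 - x + 1) (n ord0) * poch (be + 1) (n ord0)
   / poch (x + be + 1) (n ord0) * (poch x s / poch (x + (be + (n ord0)%:R) + 1) s))) //.
  move: Y; rewrite tot_recl => /poch_add_neq0[_ Y'].
  rewrite CsumZ IH //; last first.
  - by rewrite (_ : x + (be + (n ord0)%:R) + 1 = x + be + 1 + (n ord0)%:R) //; ring.
  - by move=> i; rewrite -sum_ge_lift.
  rewrite big_ord_recl !poch_add !invfM.
  rewrite (_ : be + 1 + (n ord0)%:R = be + (n ord0)%:R + 1); last by ring.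
  rewrite (_ : x + be + 1 + (n ord0)%:R = x + (be + (n ord0)%:R) + 1); last by ring.
  by ring.
move=> l le_l; apply: head_sum_x1; apply: (poch_neq0_le (leq_tot_tail le_l)).
- by rewrite -sum_ge0.
- exact: Y.
Qed.

Lemma Csum_head0 M p w be (n : 'I_p.+1 -> nat) al : (0 < M)%N ->
  n ord0 = 0%N -> poch (al ord0 + 1) (tot n) != 0 ->
  Csum M w be n al = Csum M w be (tail n) (tail al).
Proof.
move=> M0 n0E alS; rewrite (Csum_head_eq (w' := w)) ?n0E ?addr0 // => l le_l.
apply: head_sum0; apply: (poch_neq0_le _ alS).
by rewrite (leq_trans _ (leq_tot_tail le_l)) ?leq_addr.
Qed.

Lemma Csum_x2_recl M p x be (n : 'I_p.+1 -> nat) al m (be' := be + m.+1%:R) :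
  (n ord0 < M)%N -> n ord0 = m.+1 ->
  poch (al ord0 + 1) (tot n) != 0 -> poch (x + be + 2) (tot n) != 0 ->
  Csum M (fun s => poch x s / poch (x + be + 2) s) be n al
  = poch (be + 2) m * poch (al ord0 - x + 1) m / poch (x + be + 2) m.+1
    * ((al ord0 - x) * (be' + 1)
         * Csum M (fun s => poch x s / poch (x + be' + 2) s) be' (tail n) (tail al)
       + m.+1%:R * (x + be' + 1)
         * Csum M (fun s => poch x s / poch (x + be' + 1) s) be' (tail n) (tail al)).
Proof.
move=> n0M n0E alS Y.
rewrite (Csum_head_eq (w' := fun s => poch (be + 2) m * poch (al ord0 - x + 1) m
    / poch (x + be + 2) m.+1 * ((al ord0 - x) * (be' + 1) * (poch x s / poch (x + be' + 2) s)
       + m.+1%:R * (x + be' + 1) * (poch x s / poch (x + be' + 1) s)))) //.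
  by rewrite n0E CsumZ CsumD !CsumZ.
move=> l le_l; rewrite n0E; apply: head_sum_x2.
- by apply: (poch_neq0_le _ alS); rewrite -n0E leq_tot_tail.
- by apply: (poch_neq0_le _ Y); rewrite -n0E leq_tot_tail.
Qed.

(* The induction step only needs [Csum_x2] in this form, which holds without
   any hypothesis on [be + 1] when [tot n = 0]. *)
Lemma Csum_x2_mul M p x be (n : 'I_p -> nat) al : (forall i, n i < M)%N ->
  ((0 < tot n)%N ->
   Csum M (fun s => poch x s / poch (x + be + 2) s) be n al
   = poch_pred (be + 2) (tot n) / poch (x + be + 2) (tot n)
     * ((x + be + (tot n)%:R + 1) * \prod_(i < p) poch (al i - x + 1) (n i)
        - x * \prod_(i < p) poch (al i - x) (n i))) ->
  (be + 1) * Csum M (fun s => poch x s / poch (x + be + 2) s) be n al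
  = poch (be + 1) (tot n) / poch (x + be + 2) (tot n)
    * ((x + be + (tot n)%:R + 1) * \prod_(i < p) poch (al i - x + 1) (n i)
       - x * \prod_(i < p) poch (al i - x) (n i)).
Proof.
move=> nM; case Et: (tot n) => [|k] Csum_n.
  have n0 := tot_eq0 Et.
  rewrite Csum_tot0 // !big1 => [|i _|i _]; rewrite ?n0 ?poch0 //.
  by rewrite !divr1 mulr1 addr0 !mulr1; ring.
rewrite Csum_n //= [poch (be + 1) _]poch_recl.
by rewrite (_ : be + 1 + 1 = be + 2) ?mulrA //; ring.
Qed.

Lemma Csum_x2 M p x be (n : 'I_p -> nat) al : (forall i, n i < M)%N ->
  (forall i, poch (al i + 1) (sum_ge n i) != 0) ->
  poch (x + be + 2) (tot n) != 0 ->
  (tot n = 0%N -> be + 1 != 0) ->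
  Csum M (fun s => poch x s / poch (x + be + 2) s) be n al
  = poch_pred (be + 2) (tot n) / poch (x + be + 2) (tot n)
    * ((x + be + (tot n)%:R + 1) * \prod_(i < p) poch (al i - x + 1) (n i)
       - x * \prod_(i < p) poch (al i - x) (n i)).
Proof.
elim: p be n al => [|p IH] be n al nM alS Y B.
  have t0 : tot n = 0%N by rewrite /tot big_ord0.
  rewrite Csum_tot0 // t0 !big_ord0 !poch0 /poch_pred.
  by field; rewrite (_ : be + 2 - 1 = be + 1) ?B //; ring.
have alS' i : poch (al (lift ord0 i) + 1) (sum_ge (tail n) i) != 0 by rewrite -sum_ge_lift.
have al0S := alS ord0; rewrite sum_ge0 in al0S.
have totE := tot_recl n.
case n0E: (n ord0) totE => [|m] totE.
  rewrite Csum_head0 ?(leq_ltn_trans _ (nM ord0)) // IH //; first last.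
  - by move=> t0; apply: B; rewrite totE t0.
  - by rewrite totE in Y.
  by rewrite totE !big_ord_recl n0E !poch0 !mul1r.
set t := tot (tail n) in totE *; set be' := be + m.+1%:R.
have [Yb Yt] : poch (x + be + 2) m.+1 != 0 /\ poch (x + be' + 2) t != 0.
  rewrite (_ : x + be' + 2 = x + be + 2 + m.+1%:R); last by rewrite /be'; ring.
  by apply: poch_add_neq0; rewrite -totE.
have be'E : be' = be + 1 + m%:R by rewrite /be' -natr1; ring.
have [_ Y1] : poch (x + be + 2) m != 0 /\ poch (x + be' + 1) t != 0.
  rewrite (_ : x + be' + 1 = x + be + 2 + m%:R); last by rewrite be'E; ring.
  by apply: poch_add_neq0; apply: (poch_neq0_le _ Y); rewrite totE leqW.
rewrite (Csum_x2_recl (nM ord0) n0E) // -/be' Csum_x1 // -/t.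
set P1 := \prod_(i < p) poch (al (lift ord0 i) - x + 1) (n (lift ord0 i)).
set P0 := \prod_(i < p) poch (al (lift ord0 i) - x) (n (lift ord0 i)).
have Zb : x + be' + 1 != 0.
  by have [_ _ _] := poch_succ_neq0 Yb; rewrite be'E (_ : _ + 1 = x + be + 2 + m%:R) //; ring.
have Zt : x + be' + 1 + t%:R != 0.
  have : poch (x + be + 2) (m + t).+1 != 0 by apply: (poch_neq0_le _ Y); rewrite totE.
  by case/poch_succ_neq0 => _ _ _; rewrite be'E natrD; apply: contra_neq => <-; ring.
rewrite -[(al ord0 - x) * _ * _]mulrA Csum_x2_mul // => [|t_pos]; last first.
  by rewrite IH // => t0; rewrite t0 in t_pos.
rewrite -/t totE addSn /= !big_ord_recl n0E -/P1 -/P0.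
rewrite [poch (be + 2) (m + t)]poch_add -addSn [poch (x + be + 2) (m.+1 + t)]poch_add.
rewrite [poch (al ord0 - x + 1) m.+1]poch_recr [poch (al ord0 - x) m.+1]poch_recl.
rewrite (_ : be + 2 + m%:R = be' + 1); last by rewrite be'E; ring.
rewrite (_ : x + be + 2 + m.+1%:R = x + be' + 1 + 1); last by rewrite be'E -natr1; ring.
rewrite (_ : x + be' + 2 = x + be' + 1 + 1); last by ring.
rewrite !(poch_shift1 _ Zb) be'E.
by field; rewrite -be'E Zb Zt Y1 Yb.
Qed.

End MultipleSum.

Theorem mainTheorem2 (R : realFieldType) (p : nat) (N : nat)
    (n : 'I_p -> nat) (alpha : 'I_p -> R) (beta x : R) :
  (0 < p)%N ->
  (tot n <= N)%N ->
  (forall l : {ffun 'I_p -> 'I_N.+1}, (forall i, (l i <= n i)%N) ->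
     [/\ poch (x + beta + 2) (tot (fun i => nat_of_ord (l i))) != 0,
         poch (- (N%:R : R)) (tot (fun i => nat_of_ord (l i))) != 0,
         (forall i, poch (alpha i + 1) (sum_ge (fun j => nat_of_ord (l j)) i) != 0)
       & (forall i : 'I_p, (i.+1 < p)%N ->
            poch (alpha i + beta + (sum_le n i)%:R + 1)
                 (sum_gt (fun j => nat_of_ord (l j)) i) != 0)]) ->
  (forall i, poch (alpha i + beta + (tot n)%:R + 1) (n i) != 0) ->
  poch (x + beta + 2) (tot n) != 0 ->
  (tot n = 0%N -> beta + 1 != 0) ->
  \sum_(l : {ffun 'I_p -> 'I_N.+1} | [forall i, (l i <= n i)%N])
     (poch (- (N%:R : R)) (tot (fun i => nat_of_ord (l i)))
      * poch x (tot (fun i => nat_of_ord (l i)))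
      / poch (x + beta + 2) (tot (fun i => nat_of_ord (l i)))
      * Ccoef N alpha beta n (fun i => nat_of_ord (l i)))
  = poch_pred (beta + 2) (tot n) * poch (- (N%:R : R)) (tot n)
    / (poch (x + beta + 2) (tot n)
       * \prod_(q < p) poch (alpha q + beta + (tot n)%:R + 1) (n q))
    * ((x + beta + (tot n)%:R + 1) * \prod_(q < p) poch (alpha q - x + 1) (n q)
       - x * \prod_(q < p) poch (alpha q - x) (n q)).
Proof.
move=> _ nN nonzero _ Y B.
have nM i : (n i < N.+1)%N by rewrite ltnS (leq_trans (leq_tot n i)).
set c := poch (- N%:R) (tot n) * \prod_(i < p) (poch (alpha i + beta + (tot n)%:R + 1) (n i))^-1.
transitivity (c * Csum N.+1 (fun s => poch x s / poch (x + beta + 2) s) beta n alpha).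
  rewrite /Csum mulr_sumr; apply: eq_bigr => l /forallP le_l.
  have [_ NL _ E_gt] := nonzero l le_l.
  by rewrite Ccoef_Ccore // /c -[RHS](mulfK NL); ring.
rewrite Csum_x2 //; last first.
  pose ln : {ffun 'I_p -> 'I_N.+1} := [ffun i => inord (n i)].
  have lnE : (fun i => nat_of_ord (ln i)) = n.
    by apply: functional_extensionality => i; rewrite ffunE inordK.
  have [_ _ + _] := nonzero ln (fun i => eq_leq (congr1 (fun f => f i) lnE)).
  by rewrite lnE.
by rewrite /c prodfV invfM; ring.
Qed.
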